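(* For generic $x_0,x_1,\dots,x_L$, the six-vertex partition function with domain-wall boundaries satisfies, for every $0\le l\le L$, \[ \sum_{i=0}^L\sigma_i^{(l)}\,Z(X_i^0)=0, \] where $X_0^0:=X$ and \[ \sigma_i^{(l)}=\begin{cases}\dfrac{c(x_0-x_l)}{b(x_0-x_l)}\displaystyle\prod_{k=1}^La(x_0-\mu_k)\prod_{\substack{k=1\\k\ne l}}^L\frac{a(x_k-x_0)}{b(x_k-x_0)} & i=0,\ l\ne0,\\[2ex] \displaystyle\prod_{k=1}^Lb(x_l-\mu_k)-\prod_{k=1}^La(x_l-\mu_k)\prod_{\substack{k=0\\k\ne l}}^L\frac{a(x_k-x_l)}{b(x_k-x_l)} & i=l,\\[2ex] \dfrac{c(x_i-x_l)}{b(x_i-x_l)}\displaystyle\prod_{k=1}^La(x_i-\mu_k)\prod_{\substack{k=0\\k\ne i,l}}^L\frac{a(x_k-x_i)}{b(x_k-x_i)} & \text{otherwise.}\end{cases} \]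
   Context: Six-vertex setup. Fix $\gamma\in\mathbb C$, $L\ge1$ and $\mu_1,\dots,\mu_L\in\mathbb C$. Let $a(x)=\sinh(x+\gamma)$, $b(x)=\sinh x$, $c(x)=\sinh\gamma$ (constant). With $v_1,v_2$ the standard basis of $\mathbb C^2$, let $R(x)$ be the matrix on $\mathbb C^2\otimes\mathbb C^2$ which in the ordered basis $v_1\otimes v_1,v_1\otimes v_2,v_2\otimes v_1,v_2\otimes v_2$ is $\begin{pmatrix}a(x)&0&0&0\\0&b(x)&c(x)&0\\0&c(x)&b(x)&0\\0&0&0&a(x)\end{pmatrix}$. On $\mathbb C^2_0\otimes(\mathbb C^2)^{\otimes L}$, let $T_0(x)=R_{01}(x-\mu_1)R_{02}(x-\mu_2)\cdots R_{0L}(x-\mu_L)$ (with $R_{0i}$ acting on the auxiliary factor $0$ and quantum factor $i$), written in the auxiliary space as $\begin{pmatrix}A(x)&B(x)\\C(x)&D(x)\end{pmatrix}$. With $|0\rangle=v_1^{\otimes L}$ and $\langle\bar0|=(v_2^* )^{\otimes L}$, the partition function of the six-vertex model with domain-wall boundaries is $Z(x_1,\dots,x_L)=\langle\bar0|B(x_1)B(x_2)\cdots B(x_L)|0\rangle$. Notation: $X=(x_1,\dots,x_L)$; for $1\le i\le L$, $X_i^0$ is $X$ with $x_i$ replaced by $x_0$. *)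

From Stdlib Require Import Reals List Bool.
Open Scope R_scope.

Record Cplx := mkC { re : R; im : R }.

Definition C0 : Cplx := mkC 0 0.
Definition C1 : Cplx := mkC 1 0.
Definition Cadd (z w : Cplx) : Cplx := mkC (re z + re w) (im z + im w).
Definition Copp (z : Cplx) : Cplx := mkC (- re z) (- im z).
Definition Csub (z w : Cplx) : Cplx := Cadd z (Copp w).
Definition Cmul (z w : Cplx) : Cplx :=
  mkC (re z * re w - im z * im w) (re z * im w + im z * re w).
(* multiplicative inverse; the value at 0 is irrelevant (never used below
   under the hypotheses of the theorem) *)
Definition Cinv (z : Cplx) : Cplx :=
  let n := re z * re z + im z * im z in mkC (re z / n) (- im z / n).
Definition Cdiv (z w : Cplx) : Cplx := Cmul z (Cinv w).

Definition Cexp (z : Cplx) : Cplx :=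
  mkC (exp (re z) * cos (im z)) (exp (re z) * sin (im z)).
Definition Csinh (z : Cplx) : Cplx :=
  Cmul (mkC (/2) 0) (Csub (Cexp z) (Cexp (Copp z))).

Fixpoint Csum (n : nat) (f : nat -> Cplx) : Cplx :=
  match n with O => C0 | S m => Cadd (Csum m f) (f m) end.
Fixpoint Cprod (n : nat) (f : nat -> Cplx) : Cplx :=
  match n with O => C1 | S m => Cmul (Cprod m f) (f m) end.
(* product over k = m, m+1, ..., n *)
Definition Cprod_range (m n : nat) (f : nat -> Cplx) : Cplx :=
  Cprod (S n - m) (fun j => f (m + j)%nat).

Definition wa (g x : Cplx) : Cplx := Csinh (Cadd x g).
Definition wb (x : Cplx) : Cplx := Csinh x.
Definition wc (g : Cplx) : Cplx := Csinh g.

(* Matrix entry of R(x) in row v_al (x) v_ga, column v_be (x) v_de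
   (first factor auxiliary, second quantum); false = v_1, true = v_2. *)
Definition Rent (g x : Cplx) (al ga be de : bool) : Cplx :=
  match al, ga, be, de with
  | false, false, false, false => wa g x
  | false, true,  false, true  => wb x
  | false, true,  true,  false => wc g
  | true,  false, false, true  => wc g
  | true,  false, true,  false => wb x
  | true,  true,  true,  true  => wa g x
  | _, _, _, _ => C0
  end.

(* Vectors of (C^2)^{(x)L}: coordinates on the basis v_{s_1} (x) ... (x) v_{s_L},
   indexed by s : list bool (only lists of length L are relevant).
   Vectors of C^2_0 (x) (C^2)^{(x)L}: functions bool -> St. *)
Definition St := list bool -> Cplx.
Definition AuxSt := bool -> St.

Fixpoint upd (s : list bool) (p : nat) (d : bool) : list bool :=
  match s, p with
  | nil, _ => nil
  | _ :: t, O => d :: t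
  | h :: t, S q => h :: upd t q d
  end.

Definition bsum (f : bool -> Cplx) : Cplx := Cadd (f false) (f true).

(* R_{0i}(x) acting on auxiliary factor 0 and quantum factor i (1-based) *)
Definition R0i (g : Cplx) (i : nat) (x : Cplx) (psi : AuxSt) : AuxSt :=
  fun al s => bsum (fun be => bsum (fun de =>
    Cmul (Rent g x al (nth (i - 1) s false) be de) (psi be (upd s (i - 1) de)))).

Fixpoint Tfrom (g : Cplx) (mu : nat -> Cplx) (x : Cplx) (k n : nat) (psi : AuxSt)
  : AuxSt :=
  match n with
  | O => psi
  | S n' => R0i g k (Csub x (mu k)) (Tfrom g mu x (S k) n' psi)
  end.

(* monodromy T_0(x) = R_{01}(x-mu_1) ... R_{0L}(x-mu_L) *)
Definition T0 (L : nat) (g : Cplx) (mu : nat -> Cplx) (x : Cplx) : AuxSt -> AuxSt :=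
  Tfrom g mu x 1 L.

(* B(x) = <v_1|_0 T_0(x) |v_2>_0 *)
Definition Bop (L : nat) (g : Cplx) (mu : nat -> Cplx) (x : Cplx) (phi : St) : St :=
  T0 L g mu x (fun be => if be then phi else (fun _ => C0)) false.

Fixpoint Bchain (L : nat) (g : Cplx) (mu y : nat -> Cplx) (k n : nat) (phi : St)
  : St :=
  match n with
  | O => phi
  | S n' => Bop L g mu (y k) (Bchain L g mu y (S k) n' phi)
  end.

Definition vac (L : nat) : St :=
  fun s => if list_eq_dec bool_dec s (repeat false L) then C1 else C0.

(* Z(x_1,...,x_L) = <0bar| B(x_1) ... B(x_L) |0>, <0bar| = (v_2^* )^{(x)L};
   the spectral parameters are y 1, ..., y L. *)
Definition Zdw (L : nat) (g : Cplx) (mu y : nat -> Cplx) : Cplx :=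
  Bchain L g mu y 1 L (vac L) (repeat true L).

(* X_i^0 : x_i replaced by x_0 (for i = 0 this is X itself) *)
Definition Xrep (x : nat -> Cplx) (i : nat) : nat -> Cplx :=
  fun k => if Nat.eqb k i then x O else x k.

Definition ab (g : Cplx) (x : nat -> Cplx) (k j : nat) : Cplx :=
  Cdiv (wa g (Csub (x k) (x j))) (wb (Csub (x k) (x j))).

Definition sigma_coef (L : nat) (g : Cplx) (mu x : nat -> Cplx) (l i : nat) : Cplx :=
  if Nat.eqb i l then
    Csub (Cprod_range 1 L (fun k => wb (Csub (x l) (mu k))))
         (Cmul (Cprod_range 1 L (fun k => wa g (Csub (x l) (mu k))))
               (Cprod_range 0 L (fun k => if Nat.eqb k l then C1 else ab g x k l)))
  else if Nat.eqb i 0 then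
    Cmul (Cdiv (wc g) (wb (Csub (x O) (x l))))
      (Cmul (Cprod_range 1 L (fun k => wa g (Csub (x O) (mu k))))
            (Cprod_range 1 L (fun k => if Nat.eqb k l then C1 else ab g x k O)))
  else
    Cmul (Cdiv (wc g) (wb (Csub (x i) (x l))))
      (Cmul (Cprod_range 1 L (fun k => wa g (Csub (x i) (mu k))))
            (Cprod_range 0 L (fun k =>
               if Nat.eqb k i || Nat.eqb k l then C1 else ab g x k i))).

(* The relation comes from computing <0bar| A(x_0) B(x_1) ... B(x_L) |0> in two
   ways.  The dual vacuum is a left eigenvector of A(x_0) with eigenvalue
   prod_k b(x_0 - mu_k), which gives a multiple of Z(X).  On the other hand the
   exchange relation between A and B, a consequence of the RTT relation and hence
   of the Yang-Baxter equation for R, moves A(x_0) through the B's onto |0>,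
   where it acts by prod_k a(x_0 - mu_k); the unwanted terms have one x_i
   replaced by x_0 and are the Z(X_i^0).  This is the case l = 0.  The B's
   commute, so Z is symmetric in x_1, ..., x_L, and the general case follows by
   exchanging x_0 and x_l. *)

From Stdlib Require Import Reals List Bool Lia Psatz Permutation FinFun.
From Stdlib Require Import FunctionalExtensionality.
Open Scope R_scope.

Lemma mkC_eq (a b c d : R) : a = c -> b = d -> mkC a b = mkC c d.
Proof. intros -> ->; reflexivity. Qed.

Lemma C_ring : ring_theory C0 C1 Cadd Cmul Csub Copp (@eq Cplx).
Proof.
  constructor; intros; repeat match goal with z : Cplx |- _ => destruct z end;
    unfold Cadd, Cmul, Csub, Copp, C0, C1; simpl; try reflexivity; apply mkC_eq; ring.
Qed.

Lemma Cnorm2_neq0 (z : Cplx) : z <> C0 -> re z * re z + im z * im z <> 0.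
Proof.
  destruct z as [a b]; simpl; intros Hz E; apply Hz.
  assert (a = 0) by nra; assert (b = 0) by nra; subst; reflexivity.
Qed.

Lemma C_field : field_theory C0 C1 Cadd Cmul Csub Copp Cdiv Cinv (@eq Cplx).
Proof.
  constructor.
  - exact C_ring.
  - unfold C1, C0; intro E; injection E; lra.
  - reflexivity.
  - intros z Hz; pose proof (Cnorm2_neq0 z Hz).
    destruct z as [a b]; unfold Cmul, Cinv, C1; simpl in *; apply mkC_eq; field; auto.
Qed.

Add Field C_field : C_field.

Lemma Cmul_neq0 (a b : Cplx) : a <> C0 -> b <> C0 -> Cmul a b <> C0.
Proof.
  intros Ha Hb E; apply Hb.
  transitivity (Cmul (Cinv a) (Cmul a b)); [field; auto | rewrite E; ring].
Qed.

Lemma Cmul_reg_l (a p q : Cplx) : a <> C0 -> Cmul a p = Cmul a q -> p = q.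
Proof.
  intros Ha E.
  transitivity (Cmul (Cinv a) (Cmul a p)); [field; auto | rewrite E; field; auto].
Qed.

Lemma Csub_eq0 (p q : Cplx) : Csub p q = C0 -> p = q.
Proof. intros E; transitivity (Cadd (Csub p q) q); [ring | rewrite E; ring]. Qed.

Lemma C_eq_dec (a b : Cplx) : {a = b} + {a <> b}.
Proof.
  destruct a as [a1 a2], b as [b1 b2].
  destruct (Req_dec_T a1 b1), (Req_dec_T a2 b2); subst;
    try (left; reflexivity); right; intro E; injection E; auto.
Qed.

Lemma Csum_ext m (F G : nat -> Cplx) :
  (forall i, (i < m)%nat -> F i = G i) -> Csum m F = Csum m G.
Proof. induction m; intros E; simpl; auto; rewrite IHm, E; auto. Qed.

Lemma Cprod_ext m (F G : nat -> Cplx) :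
  (forall i, (i < m)%nat -> F i = G i) -> Cprod m F = Cprod m G.
Proof. induction m; intros E; simpl; auto; rewrite IHm, E; auto. Qed.

Lemma Csum_first m (F : nat -> Cplx) :
  Csum (S m) F = Cadd (F O) (Csum m (fun i => F (S i))).
Proof. induction m; simpl in *; [|rewrite IHm]; ring. Qed.

Lemma Cprod_first m (F : nat -> Cplx) :
  Cprod (S m) F = Cmul (F O) (Cprod m (fun i => F (S i))).
Proof. induction m; simpl in *; [|rewrite IHm]; ring. Qed.

Lemma Csum_scale m c (F : nat -> Cplx) :
  Csum m (fun i => Cmul c (F i)) = Cmul c (Csum m F).
Proof. induction m; simpl; [|rewrite IHm]; ring. Qed.

Lemma Csum_lincomb m a b (F G H : nat -> Cplx) :
  Csum m (fun i => Cmul (Csub (Cmul a (F i)) (Cmul b (G i))) (H i))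
  = Csub (Cmul a (Csum m (fun i => Cmul (F i) (H i))))
         (Cmul b (Csum m (fun i => Cmul (G i) (H i)))).
Proof. induction m; simpl; [|rewrite IHm]; ring. Qed.

Lemma Cprod_range_0 L F : Cprod_range 0 L F = Cmul (F O) (Cprod L (fun j => F (S j))).
Proof. apply Cprod_first. Qed.

Lemma Cprod_range_1 L F : Cprod_range 1 L F = Cprod L (fun j => F (S j)).
Proof. unfold Cprod_range; replace (S L - 1)%nat with L by lia; reflexivity. Qed.

Lemma Cprod_range_ext m n F G : (forall k, (m <= k <= n)%nat -> F k = G k) ->
  Cprod_range m n F = Cprod_range m n G.
Proof. intros E; apply Cprod_ext; intros i Hi; apply E; lia. Qed.

Definition transp (a b k : nat) : nat :=
  if Nat.eqb k a then b else if Nat.eqb k b then a else k.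

(* Case analysis on the innermost [Nat.eqb] tests first, so that the generated
   hypotheses are plain (in)equations usable by [lia]. *)
Ltac case_nat_eqb :=
  repeat match goal with |- context [Nat.eqb ?a ?b] =>
    lazymatch constr:((a, b)) with
    | context [Nat.eqb _ _] => fail
    | _ => destruct (Nat.eqb_spec a b); cbv beta iota; try lia
    end
  end.

Lemma transp_involutive a b k : transp a b (transp a b k) = k.
Proof. unfold transp; case_nat_eqb. Qed.

Lemma transp_le a b n k :
  (a <= n)%nat -> (b <= n)%nat -> (k <= n)%nat -> (transp a b k <= n)%nat.
Proof. unfold transp; case_nat_eqb. Qed.

Lemma Csum_extract n F a : (a < n)%nat ->
  Csum n F = Cadd (F a) (Csum n (fun i => if Nat.eqb i a then C0 else F i)).
Proof.
  induction n as [|n IH]; intros Ha; [lia|]; simpl.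
  destruct (Nat.eq_dec a n) as [->|Hne].
  - rewrite Nat.eqb_refl, (Csum_ext n (fun i => if Nat.eqb i n then C0 else F i) F); [ring|].
    intros i Hi; case_nat_eqb; reflexivity.
  - rewrite IH by lia; case_nat_eqb; ring.
Qed.

Lemma Cprod_extract n F a : (a < n)%nat ->
  Cprod n F = Cmul (F a) (Cprod n (fun i => if Nat.eqb i a then C1 else F i)).
Proof.
  induction n as [|n IH]; intros Ha; [lia|]; simpl.
  destruct (Nat.eq_dec a n) as [->|Hne].
  - rewrite Nat.eqb_refl, (Cprod_ext n (fun i => if Nat.eqb i n then C1 else F i) F);
      [ring|].
    intros i Hi; case_nat_eqb; reflexivity.
  - rewrite IH by lia; case_nat_eqb; ring.
Qed.

Lemma Csum_transp n F a b : (a < n)%nat -> (b < n)%nat -> a <> b ->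
  Csum n F = Csum n (fun i => F (transp a b i)).
Proof.
  intros Ha Hb Hab.
  rewrite (Csum_extract n F a), (Csum_extract n _ b),
    (Csum_extract n (fun i => F (transp a b i)) a),
    (Csum_extract n (fun i => if Nat.eqb i a then C0 else F (transp a b i)) b) by auto.
  rewrite (Csum_ext n (fun i => if Nat.eqb i b then C0 else if Nat.eqb i a then C0
                                else F (transp a b i))
                      (fun i => if Nat.eqb i b then C0 else if Nat.eqb i a then C0 else F i)).
  - unfold transp; case_nat_eqb; ring.
  - intros i _; unfold transp; case_nat_eqb; reflexivity.
Qed.

Lemma Cprod_transp n F a b : (a < n)%nat -> (b < n)%nat -> a <> b ->
  Cprod n F = Cprod n (fun i => F (transp a b i)).
Proof.
  intros Ha Hb Hab.
  rewrite (Cprod_extract n F a), (Cprod_extract n _ b),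
    (Cprod_extract n (fun i => F (transp a b i)) a),
    (Cprod_extract n (fun i => if Nat.eqb i a then C1 else F (transp a b i)) b) by auto.
  rewrite (Cprod_ext n (fun i => if Nat.eqb i b then C1 else if Nat.eqb i a then C1
                                else F (transp a b i))
                      (fun i => if Nat.eqb i b then C1 else if Nat.eqb i a then C1 else F i)).
  - unfold transp; case_nat_eqb; ring.
  - intros i _; unfold transp; case_nat_eqb; reflexivity.
Qed.

Lemma transp_seq_perm a b m n : (m <= a < m + n)%nat -> (m <= b < m + n)%nat ->
  Permutation (map (transp a b) (seq m n)) (seq m n).
Proof.
  intros Ha Hb; apply NoDup_Permutation.
  - apply Injective_map_NoDup; [|apply seq_NoDup].
    intros i j E; rewrite <- (transp_involutive a b i), E; apply transp_involutive.
  - apply seq_NoDup.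
  - intro k; rewrite in_map_iff, in_seq; split.
    + intros [j [<- Hj]]; apply in_seq in Hj; unfold transp; case_nat_eqb.
    + intro Hk; exists (transp a b k); rewrite transp_involutive, in_seq; split; auto.
      unfold transp; case_nat_eqb.
Qed.

Lemma ForallOrdPairs_map_NoDup {A B} (R : B -> B -> Prop) (f : A -> B) (l : list A) :
  (forall j k, In j l -> In k l -> j <> k -> R (f j) (f k)) ->
  NoDup l -> ForallOrdPairs R (map f l).
Proof.
  intros HR Hnd; induction Hnd as [|j l Hj Hnd IH]; simpl; constructor.
  - apply Forall_forall; intros w Hw; apply in_map_iff in Hw as [k [<- Hk]].
    apply HR; simpl; auto; intros ->; contradiction.
  - apply IH; intros; apply HR; simpl; auto.
Qed.

(** * Boltzmann weights and the Yang-Baxter equation *)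

Lemma Cexp_add (z w : Cplx) : Cexp (Cadd z w) = Cmul (Cexp z) (Cexp w).
Proof.
  destruct z as [a b], w as [c d]; unfold Cexp, Cadd, Cmul; simpl.
  rewrite exp_plus, cos_plus, sin_plus; apply mkC_eq; ring.
Qed.

Lemma Cexp_neq0 (z : Cplx) : Cexp z <> C0.
Proof.
  destruct z as [a b]; unfold Cexp, C0; simpl; intro E; injection E as Ec Es.
  pose proof (exp_pos a); pose proof (sin2_cos2 b); unfold Rsqr in *.
  apply Rmult_integral in Ec, Es; destruct Ec, Es; nra.
Qed.

Lemma Cexp_opp (z : Cplx) : Cexp (Copp z) = Cinv (Cexp z).
Proof.
  assert (E : Cmul (Cexp z) (Cexp (Copp z)) = C1).
  { rewrite <- Cexp_add; destruct z as [a b]; unfold Cadd, Copp, Cexp, C1; simpl.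
    rewrite Rplus_opp_r, Rplus_opp_r, exp_0, cos_0, sin_0; apply mkC_eq; ring. }
  pose proof (Cexp_neq0 z).
  transitivity (Cmul (Cinv (Cexp z)) (Cmul (Cexp z) (Cexp (Copp z)))); [field; auto|].
  rewrite E; field; auto.
Qed.

Lemma Cexp_sub_ratio (x y m : Cplx) :
  Cexp (Csub x y) = Cdiv (Cexp (Csub x m)) (Cexp (Csub y m)).
Proof.
  replace (Csub x y) with (Cadd (Csub x m) (Copp (Csub y m))) by ring.
  rewrite Cexp_add, Cexp_opp; reflexivity.
Qed.

Definition sinh_of_exp (E : Cplx) : Cplx := Cmul (mkC (/2) 0) (Csub E (Cinv E)).

Lemma Csinh_of_exp (z : Cplx) : Csinh z = sinh_of_exp (Cexp z).
Proof. unfold Csinh, sinh_of_exp; rewrite Cexp_opp; reflexivity. Qed.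

Lemma wa_of_exp (g u : Cplx) : wa g u = sinh_of_exp (Cmul (Cexp u) (Cexp g)).
Proof. unfold wa; rewrite Csinh_of_exp, Cexp_add; reflexivity. Qed.

Lemma wb_of_exp (u : Cplx) : wb u = sinh_of_exp (Cexp u).
Proof. apply Csinh_of_exp. Qed.

Lemma wc_of_exp (g : Cplx) : wc g = sinh_of_exp (Cexp g).
Proof. apply Csinh_of_exp. Qed.

(* All weights are rational in X = e^(x-m), Y = e^(y-m) and G = e^g, so each
   of the 64 components is an identity of rational functions. *)
Lemma R_yang_baxter (g x y m : Cplx) (i j h r r' d : bool) :
  bsum (fun p => bsum (fun q => bsum (fun de =>
     Cmul (Rent g (Csub x y) i j p q)
       (Cmul (Rent g (Csub x m) p h r de) (Rent g (Csub y m) q de r' d)))))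
  = bsum (fun p => bsum (fun q => bsum (fun de =>
     Cmul (Rent g (Csub y m) j h q de)
       (Cmul (Rent g (Csub x m) i de p d) (Rent g (Csub x y) p q r r'))))).
Proof.
  pose proof (Cexp_neq0 (Csub x m)); pose proof (Cexp_neq0 (Csub y m));
  pose proof (Cexp_neq0 g).
  unfold bsum; destruct i, j, h, r, r', d; simpl;
    rewrite ?wa_of_exp, ?wb_of_exp, ?wc_of_exp, ?(Cexp_sub_ratio x y m);
    unfold sinh_of_exp; field; auto.
Qed.

Lemma wb_sub_anti (y w : Cplx) : wb (Csub w y) = Copp (wb (Csub y w)).
Proof.
  rewrite !wb_of_exp, (Cexp_sub_ratio w y C0), (Cexp_sub_ratio y w C0).
  pose proof (Cexp_neq0 (Csub w C0)); pose proof (Cexp_neq0 (Csub y C0)).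
  unfold sinh_of_exp; field; auto.
Qed.

Lemma weights_addition (g y w z : Cplx) :
  Cmul (wa g (Csub y w)) (wb (Csub y z)) =
  Cadd (Cmul (wa g (Csub y z)) (wb (Csub y w))) (Cmul (wc g) (wb (Csub w z))).
Proof.
  rewrite wc_of_exp, !wa_of_exp, !wb_of_exp,
    (Cexp_sub_ratio y w C0), (Cexp_sub_ratio y z C0), (Cexp_sub_ratio w z C0).
  pose proof (Cexp_neq0 (Csub w C0)); pose proof (Cexp_neq0 (Csub y C0));
  pose proof (Cexp_neq0 (Csub z C0)); pose proof (Cexp_neq0 g).
  unfold sinh_of_exp; field; auto.
Qed.

(** * The monodromy matrix and the RTT relation *)

Definition shift (mu : nat -> Cplx) : nat -> Cplx := fun j => mu (S j).

Definition slice (v : St) (de : bool) : St := fun u => v (de :: u).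
Arguments slice : simpl never.

(* [mono g n mu x i k v s] is the [s]-coordinate of [<v_i| T(x) |v_k>_0 v] for
   [T(x) = R_01(x - mu 1) ... R_0n(x - mu n)], computed by peeling off the first
   site; coordinates [s] of the wrong length get junk values. *)
Fixpoint mono (g : Cplx) (n : nat) (mu : nat -> Cplx) (x : Cplx) (i k : bool)
  (v : St) (s : list bool) {struct n} : Cplx :=
  match n, s with
  | O, _ | S _, nil => if Bool.eqb i k then v s else C0
  | S n', h :: t => bsum (fun r => bsum (fun de =>
       Cmul (Rent g (Csub x (mu 1%nat)) i h r de)
            (mono g n' (shift mu) x r k (slice v de) t)))
  end.

Lemma bsum_ext (f f' : bool -> Cplx) : (forall b, f b = f' b) -> bsum f = bsum f'.
Proof. intros E; unfold bsum; rewrite !E; reflexivity. Qed.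

Section Linearity.
Variables (g : Cplx) (n : nat) (mu : nat -> Cplx) (x : Cplx) (i k : bool).

Lemma mono_add (v w : St) s :
  mono g n mu x i k (fun u => Cadd (v u) (w u)) s
  = Cadd (mono g n mu x i k v s) (mono g n mu x i k w s).
Proof.
  revert mu i v w s; induction n as [|n' IH]; intros mu' i' v w [|h t]; simpl;
    try (destruct (Bool.eqb i' k); ring).
  unfold bsum, slice; rewrite !IH; ring.
Qed.

Lemma mono_scale c (v : St) s :
  mono g n mu x i k (fun u => Cmul c (v u)) s = Cmul c (mono g n mu x i k v s).
Proof.
  revert mu i v s; induction n as [|n' IH]; intros mu' i' v [|h t]; simpl;
    try (destruct (Bool.eqb i' k); ring).
  unfold bsum, slice; rewrite !IH; ring.
Qed.

Lemma mono_zero s : mono g n mu x i k (fun _ => C0) s = C0.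
Proof.
  revert mu i s; induction n as [|n' IH]; intros mu' i' [|h t]; simpl;
    try (destruct (Bool.eqb i' k); reflexivity).
  unfold bsum, slice; rewrite !IH; ring.
Qed.

Lemma mono_Csum m (F : nat -> St) s :
  mono g n mu x i k (fun u => Csum m (fun j => F j u)) s
  = Csum m (fun j => mono g n mu x i k (F j) s).
Proof.
  induction m as [|m IH]; simpl; [apply mono_zero|].
  rewrite mono_add, IH; reflexivity.
Qed.

Lemma mono_local (v w : St) s :
  (forall u, length u = length s -> v u = w u) ->
  mono g n mu x i k v s = mono g n mu x i k w s.
Proof.
  revert mu i v w s; induction n as [|n' IH]; intros mu' i' v w [|h t] E; simpl;
    try (rewrite E; reflexivity).
  apply bsum_ext; intro r; apply bsum_ext; intro de; f_equal.
  apply IH; intros u Hu; apply E; simpl; auto.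
Qed.

End Linearity.

Lemma mono_mono_cons g n mu x y p k q l v h t :
  mono g (S n) mu x p k (mono g (S n) mu y q l v) (h :: t) =
  bsum (fun r => bsum (fun de => Cmul (Rent g (Csub x (mu 1%nat)) p h r de)
    (bsum (fun r' => bsum (fun de' => Cmul (Rent g (Csub y (mu 1%nat)) q de r' de')
       (mono g n (shift mu) x r k (mono g n (shift mu) y r' l (slice v de')) t)))))).
Proof.
  simpl; apply bsum_ext; intro r; apply bsum_ext; intro de; f_equal.
  transitivity (mono g n (shift mu) x r k (fun u => bsum (fun r' => bsum (fun de' =>
    Cmul (Rent g (Csub y (mu 1%nat)) q de r' de')
         (mono g n (shift mu) y r' l (slice v de') u)))) t); [reflexivity|].
  unfold bsum; rewrite !mono_add, !mono_scale; reflexivity.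
Qed.

(* One site of the train argument: the local Yang-Baxter equation [HYB] and the
   RTT relation [HT] for the remaining sites give RTT for one more site. *)
Lemma rtt_site_step (Rxy Rx Ry : bool -> bool -> bool -> bool -> Cplx)
  (T1 : bool -> bool -> bool -> Cplx) (T2 : bool -> bool -> bool -> bool -> bool -> Cplx)
  (i j h k l : bool) :
  (forall r r' d,
     bsum (fun p => bsum (fun q => bsum (fun de =>
        Cmul (Rxy i j p q) (Cmul (Rx p h r de) (Ry q de r' d)))))
   = bsum (fun p => bsum (fun q => bsum (fun de =>
        Cmul (Ry j h q de) (Cmul (Rx i de p d) (Rxy p q r r')))))) ->
  (forall p q d,
     bsum (fun r => bsum (fun r' => Cmul (Rxy p q r r') (T1 r r' d)))
   = bsum (fun r => bsum (fun r' => Cmul (Rxy r r' k l) (T2 q p r r' d)))) ->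
  bsum (fun p => bsum (fun q => Cmul (Rxy i j p q)
    (bsum (fun r => bsum (fun de => Cmul (Rx p h r de)
      (bsum (fun r' => bsum (fun d => Cmul (Ry q de r' d) (T1 r r' d))))))))) =
  bsum (fun p => bsum (fun q => Cmul (Rxy p q k l)
    (bsum (fun r' => bsum (fun de => Cmul (Ry j h r' de)
      (bsum (fun r => bsum (fun d => Cmul (Rx i de r d) (T2 r' r p q d))))))))).
Proof.
  intros HYB HT.
  transitivity (bsum (fun d => bsum (fun r => bsum (fun r' => Cmul (T1 r r' d)
     (bsum (fun p => bsum (fun q => bsum (fun de =>
        Cmul (Rxy i j p q) (Cmul (Rx p h r de) (Ry q de r' d)))))))))).
  { unfold bsum; ring. }
  transitivity (bsum (fun d => bsum (fun r => bsum (fun r' => Cmul (T1 r r' d)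
     (bsum (fun p => bsum (fun q => bsum (fun de =>
        Cmul (Ry j h q de) (Cmul (Rx i de p d) (Rxy p q r r')))))))))).
  { do 3 (apply bsum_ext; intro); rewrite HYB; reflexivity. }
  transitivity (bsum (fun d => bsum (fun p => bsum (fun q => bsum (fun de =>
     Cmul (Cmul (Ry j h q de) (Rx i de p d))
       (bsum (fun r => bsum (fun r' => Cmul (Rxy p q r r') (T1 r r' d))))))))).
  { unfold bsum; ring. }
  transitivity (bsum (fun d => bsum (fun p => bsum (fun q => bsum (fun de =>
     Cmul (Cmul (Ry j h q de) (Rx i de p d))
       (bsum (fun r => bsum (fun r' => Cmul (Rxy r r' k l) (T2 q p r r' d))))))))).
  { do 4 (apply bsum_ext; intro); rewrite HT; reflexivity. }
  unfold bsum; ring.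
Qed.

Lemma mono_RTT g n mu x y v s i j k l :
  bsum (fun p => bsum (fun q => Cmul (Rent g (Csub x y) i j p q)
     (mono g n mu x p k (mono g n mu y q l v) s)))
  = bsum (fun p => bsum (fun q => Cmul (Rent g (Csub x y) p q k l)
     (mono g n mu y j q (mono g n mu x i p v) s))).
Proof.
  revert mu v s i j k l; induction n as [|n IH]; intros mu v s i j k l;
    [|destruct s as [|h t]];
    [unfold bsum; destruct i, j, k, l; simpl; ring .. |].
  erewrite bsum_ext; [| intro p; apply bsum_ext; intro q; rewrite mono_mono_cons; reflexivity].
  symmetry.
  erewrite bsum_ext; [| intro p; apply bsum_ext; intro q; rewrite mono_mono_cons; reflexivity].
  symmetry.
  apply (rtt_site_step (Rent g (Csub x y)) (Rent g (Csub x (mu 1%nat)))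
           (Rent g (Csub y (mu 1%nat)))
           (fun r r' d => mono g n (shift mu) x r k (mono g n (shift mu) y r' l (slice v d)) t)
           (fun r' r p q d => mono g n (shift mu) y r' q (mono g n (shift mu) x r p (slice v d)) t)).
  - intros; apply R_yang_baxter.
  - intros; apply IH.
Qed.

(** * Commutation relations *)

Definition Ccont0 (f : R -> Cplx) : Prop :=
  continuity_pt (fun t => re (f t)) 0 /\ continuity_pt (fun t => im (f t)) 0.

Lemma Ccont0_const c : Ccont0 (fun _ => c).
Proof. split; apply continuity_pt_const; intros a b; reflexivity. Qed.

Lemma Ccont0_add f h : Ccont0 f -> Ccont0 h -> Ccont0 (fun t => Cadd (f t) (h t)).
Proof. intros [] []; split; simpl; apply continuity_pt_plus; auto. Qed.

Lemma Ccont0_sub f h : Ccont0 f -> Ccont0 h -> Ccont0 (fun t => Csub (f t) (h t)).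
Proof.
  intros [] []; split; simpl; apply continuity_pt_plus; auto; apply continuity_pt_opp; auto.
Qed.

Lemma Ccont0_mul f h : Ccont0 f -> Ccont0 h -> Ccont0 (fun t => Cmul (f t) (h t)).
Proof.
  intros [] []; split; simpl.
  - apply continuity_pt_minus; apply continuity_pt_mult; auto.
  - apply continuity_pt_plus; apply continuity_pt_mult; auto.
Qed.

Lemma Ccont0_Csinh_shift (z : Cplx) : Ccont0 (fun t => Csinh (Cadd z (mkC t 0))).
Proof. unfold Csinh, Cexp, Cmul, Csub, Cadd, Copp; split; simpl; reg. Qed.

Lemma Rcont0_vanish (u : R -> R) :
  continuity_pt u 0 -> (forall t, t <> 0 -> u t = 0) -> u 0 = 0.
Proof.
  intros Hu Hz; destruct (Req_dec (u 0) 0) as [|Hne]; auto.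
  destruct (Hu (Rabs (u 0))) as [al [Hal Hd]]; [apply Rabs_pos_lt; auto|].
  specialize (Hd (al / 2)); rewrite Hz in Hd by lra; unfold R_dist in Hd.
  assert (Rabs (0 - u 0) < Rabs (u 0)); [|rewrite Rabs_minus_sym, Rminus_0_r in *; lra].
  apply Hd; split; [split; [exact I | lra]|].
  simpl; unfold R_dist; rewrite Rminus_0_r, Rabs_right; lra.
Qed.

Lemma Ccont0_vanish (f : R -> Cplx) :
  Ccont0 f -> (forall t, t <> 0 -> f t = C0) -> f 0 = C0.
Proof.
  intros [Hre Him] Hz; destruct (f 0) as [p q] eqn:E.
  assert (p = 0 /\ q = 0) as [-> ->]; [|reflexivity].
  split; [change p with (re (mkC p q)) | change q with (im (mkC p q))]; rewrite <- E;
    [apply (Rcont0_vanish (fun t => re (f t))) | apply (Rcont0_vanish (fun t => im (f t)))];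
    auto; intros t Ht; rewrite Hz; auto.
Qed.

Definition xshift (x : Cplx) (t : R) : Cplx := Cadd x (mkC t 0).

Lemma xshift_0 x : xshift x 0 = x.
Proof. destruct x; unfold xshift, Cadd; simpl; apply mkC_eq; ring. Qed.

Lemma Ccont0_Rent_shift g x m i h r de :
  Ccont0 (fun t => Rent g (Csub (xshift x t) m) i h r de).
Proof.
  assert (Hsh : forall c, Ccont0 (fun t => Csinh (Cadd (Csub (xshift x t) m) c))).
  { intro c.
    replace (fun t => Csinh (Cadd (Csub (xshift x t) m) c))
      with (fun t => Csinh (Cadd (Cadd (Csub x m) c) (mkC t 0)))
      by (apply functional_extensionality; intro t; unfold xshift; f_equal; ring).
    apply Ccont0_Csinh_shift. }
  pose proof (Hsh g) as Ha; pose proof (Hsh C0) as Hb.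
  replace (fun t => Csinh (Cadd (Csub (xshift x t) m) C0))
    with (fun t => wb (Csub (xshift x t) m)) in Hb
    by (apply functional_extensionality; intro t; unfold wb; f_equal; ring).
  destruct i, h, r, de; simpl; auto using Ccont0_const.
Qed.

Lemma Ccont0_mono g n mu (xt : R -> Cplx) i k (v : R -> St) s :
  (forall m i h r de, Ccont0 (fun t => Rent g (Csub (xt t) m) i h r de)) ->
  (forall u, Ccont0 (fun t => v t u)) ->
  Ccont0 (fun t => mono g n mu (xt t) i k (v t) s).
Proof.
  intros HR; revert mu i v s; induction n as [|n IH]; intros mu i v s Hv;
    [|destruct s as [|h s]];
    [simpl; destruct (Bool.eqb i k); auto using Ccont0_const .. |].
  simpl; unfold bsum; repeat apply Ccont0_add; apply Ccont0_mul; auto;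
    apply IH; intro u; apply Hv.
Qed.

Lemma sinh_of_exp_eq0 (w : Cplx) : w <> C0 -> sinh_of_exp w = C0 -> Cmul w w = C1.
Proof.
  unfold sinh_of_exp; intros Hw E.
  assert (Hd : Csub w (Cinv w) = C0).
  { transitivity (Cmul (Cmul (mkC 2 0) (mkC (/2) 0)) (Csub w (Cinv w))).
    - replace (Cmul (mkC 2 0) (mkC (/2) 0)) with C1
        by (unfold Cmul, C1; simpl; apply mkC_eq; field); ring.
    - transitivity (Cmul (mkC 2 0) (Cmul (mkC (/2) 0) (Csub w (Cinv w)))); [ring|].
      rewrite E; ring. }
  transitivity (Cadd (Cmul w (Csub w (Cinv w))) C1); [field; auto | rewrite Hd; ring].
Qed.

(* [a(u) = 0] forces [e^(2(u+g)) = 1], which fails after a real shift of [u]. *)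
Lemma wa_xshift_neq0 g x m t :
  wa g (Csub x m) = C0 -> t <> 0 -> wa g (Csub (xshift x t) m) <> C0.
Proof.
  intros Ha Ht Ha'.
  rewrite wa_of_exp in Ha, Ha'.
  replace (Csub (xshift x t) m) with (Cadd (Csub x m) (mkC t 0)) in Ha'
    by (unfold xshift; ring).
  rewrite Cexp_add in Ha'.
  set (E := Cmul (Cexp (Csub x m)) (Cexp g)) in *.
  assert (HE : E <> C0) by (apply Cmul_neq0; apply Cexp_neq0).
  assert (Et : Cexp (mkC t 0) = mkC (exp t) 0)
    by (unfold Cexp; simpl; rewrite cos_0, sin_0; apply mkC_eq; ring).
  assert (Ht0 : mkC (exp t) 0 <> C0)
    by (unfold C0; intro Q; injection Q; pose proof (exp_pos t); lra).
  rewrite Et in Ha'.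
  replace (Cmul (Cmul (Cexp (Csub x m)) (mkC (exp t) 0)) (Cexp g))
    with (Cmul E (mkC (exp t) 0)) in Ha' by (unfold E; ring).
  apply sinh_of_exp_eq0 in Ha; auto; apply sinh_of_exp_eq0 in Ha'; auto using Cmul_neq0.
  assert (Q : Cmul (mkC (exp t) 0) (mkC (exp t) 0) = C1).
  { transitivity (Cmul (Cmul E E) (Cmul (mkC (exp t) 0) (mkC (exp t) 0)));
      [rewrite Ha; ring | rewrite <- Ha'; ring]. }
  unfold Cmul, C1 in Q; simpl in Q; injection Q as Q _.
  replace (exp t * exp t - 0 * 0) with (exp (t + t)) in Q by (rewrite exp_plus; ring).
  rewrite <- exp_0 in Q.
  apply exp_inv in Q; lra.
Qed.

Lemma B_comm_generic g n mu x y v s : wa g (Csub x y) <> C0 ->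
  mono g n mu x false true (mono g n mu y false true v) s =
  mono g n mu y false true (mono g n mu x false true v) s.
Proof.
  intros Ha; pose proof (mono_RTT g n mu x y v s false false true true) as E.
  unfold bsum in E; simpl in E.
  apply (Cmul_reg_l (wa g (Csub x y))); auto.
  transitivity (Cadd (Cadd (Cmul (wa g (Csub x y))
       (mono g n mu x false true (mono g n mu y false true v) s))
     (Cmul C0 (mono g n mu x false true (mono g n mu y true true v) s)))
     (Cadd (Cmul C0 (mono g n mu x true true (mono g n mu y false true v) s))
       (Cmul C0 (mono g n mu x true true (mono g n mu y true true v) s)))); [ring|].
  rewrite E; ring.
Qed.

(* At the zeros of a(x - y) the RTT relation says nothing; there we perturb x
   along the reals and pass to the limit. *)
Lemma B_comm g n mu x y v s :
  mono g n mu x false true (mono g n mu y false true v) s =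
  mono g n mu y false true (mono g n mu x false true v) s.
Proof.
  destruct (C_eq_dec (wa g (Csub x y)) C0) as [Ha|Ha]; [|apply B_comm_generic; auto].
  apply Csub_eq0; rewrite <- (xshift_0 x).
  assert (Hx : forall m i h r de, Ccont0 (fun t => Rent g (Csub (xshift x t) m) i h r de))
    by (intros; apply Ccont0_Rent_shift).
  assert (Hy : forall m i h r de, Ccont0 (fun _ : R => Rent g (Csub y m) i h r de))
    by (intros; apply Ccont0_const).
  apply (Ccont0_vanish (fun t =>
     Csub (mono g n mu (xshift x t) false true (mono g n mu y false true v) s)
          (mono g n mu y false true (mono g n mu (xshift x t) false true v) s))).
  - apply Ccont0_sub; apply Ccont0_mono; auto; intro u; [apply Ccont0_const|].
    apply Ccont0_mono; auto; intro; apply Ccont0_const.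
  - intros t Ht; rewrite B_comm_generic; [ring | apply wa_xshift_neq0; auto].
Qed.

Lemma AB_exchange g n mu x y v s : wb (Csub y x) <> C0 ->
  mono g n mu x false false (mono g n mu y false true v) s =
  Csub (Cmul (Cdiv (wa g (Csub y x)) (wb (Csub y x)))
             (mono g n mu y false true (mono g n mu x false false v) s))
       (Cmul (Cdiv (wc g) (wb (Csub y x)))
             (mono g n mu x false true (mono g n mu y false false v) s)).
Proof.
  intros Hb; pose proof (mono_RTT g n mu y x v s false false true false) as E.
  unfold bsum in E; simpl in E.
  apply (Cmul_reg_l (wb (Csub y x))); auto.
  transitivity (Csub (Cmul (wa g (Csub y x))
                       (mono g n mu y false true (mono g n mu x false false v) s))
     (Cmul (wc g) (mono g n mu x false true (mono g n mu y false false v) s)));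
    [|field; auto].
  apply Csub_eq0.
  match type of E with ?L = ?R => transitivity (Csub R L); [ring | rewrite E; ring] end.
Qed.

Definition vac_eigen (g : Cplx) (n : nat) (mu : nat -> Cplx) (z : Cplx) : Cplx :=
  Cprod n (fun j => wa g (Csub z (mu (S j)))).

Definition dual_vac_eigen (n : nat) (mu : nat -> Cplx) (z : Cplx) : Cplx :=
  Cprod n (fun j => wb (Csub z (mu (S j)))).

Lemma vac_S_cons n h t : vac (S n) (h :: t) = if h then C0 else vac n t.
Proof.
  unfold vac; simpl.
  destruct (list_eq_dec bool_dec (h :: t) (false :: repeat false n)) as [E|E],
    (list_eq_dec bool_dec t (repeat false n)) as [E'|E'], h;
    try injection E; intros; subst; try reflexivity; try discriminate; contradiction.
Qed.

Lemma mono_vac g n mu z i s :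
  mono g n mu z i false (vac n) s = if i then C0 else Cmul (vac_eigen g n mu z) (vac n s).
Proof.
  unfold vac_eigen; revert mu i s; induction n as [|n IH]; intros mu i s;
    [|destruct s as [|h t]].
  - destruct i; cbn [mono Cprod Bool.eqb]; ring.
  - destruct i; cbn [mono Bool.eqb]; [ring|].
    assert (vac (S n) nil = C0) as -> by reflexivity; ring.
  - rewrite Cprod_first, vac_S_cons; simpl; unfold bsum.
    replace (slice (vac (S n)) false) with (vac n)
      by (apply functional_extensionality; intro; unfold slice; rewrite vac_S_cons; auto).
    replace (slice (vac (S n)) true) with (fun _ : list bool => C0)
      by (apply functional_extensionality; intro; unfold slice; rewrite vac_S_cons; auto).
    rewrite !mono_zero, !IH; unfold shift; destruct i, h; simpl; ring.
Qed.

Lemma dual_vac_mono g n mu z i (w : St) :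
  mono g n mu z i false w (repeat true n)
  = if i then C0 else Cmul (dual_vac_eigen n mu z) (w (repeat true n)).
Proof.
  unfold dual_vac_eigen; revert mu i w; induction n as [|n IH]; intros mu i w.
  - simpl; destruct i; simpl; ring.
  - rewrite Cprod_first; simpl; unfold bsum; rewrite !IH; unfold slice, shift; destruct i; simpl; ring.
Qed.

Lemma nth_app_length (pre t : list bool) h : nth (length pre) (pre ++ h :: t) false = h.
Proof. induction pre; simpl; auto. Qed.

Lemma upd_app_length (pre t : list bool) h de :
  upd (pre ++ h :: t) (length pre) de = pre ++ de :: t.
Proof. induction pre; simpl; auto; rewrite IHpre; auto. Qed.

Lemma Tfrom_mono g mu x n : forall pre t psi al,
  length t = n ->
  Tfrom g mu x (S (length pre)) n psi al (pre ++ t) =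
  bsum (fun be => mono g n (fun j => mu (length pre + j)%nat) x al be
                    (fun u => psi be (pre ++ u)) t).
Proof.
  induction n as [|n IH]; intros pre [|h t] psi al Ht; try discriminate.
  - simpl; unfold bsum; destruct al; simpl; ring.
  - injection Ht as Ht; simpl Tfrom; unfold R0i.
    replace (S (length pre) - 1)%nat with (length pre) by lia.
    rewrite nth_app_length.
    transitivity (bsum (fun be => bsum (fun de =>
      Cmul (Rent g (Csub x (mu (S (length pre)))) al h be de)
        (bsum (fun be' => mono g n (fun j => mu (S (length pre) + j)%nat) x be be'
           (fun u => psi be' (pre ++ de :: u)) t))))).
    { apply bsum_ext; intro be; apply bsum_ext; intro de; f_equal.
      rewrite upd_app_length.
      replace (pre ++ de :: t) with ((pre ++ de :: nil) ++ t)
        by (rewrite <- app_assoc; reflexivity).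
      replace (S (S (length pre))) with (S (length (pre ++ de :: nil)))
        by (rewrite length_app; simpl; lia).
      rewrite IH by auto; apply bsum_ext; intro be'.
      rewrite length_app; simpl; replace (length pre + 1)%nat with (S (length pre)) by lia.
      apply mono_local; intros u _; rewrite <- app_assoc; reflexivity. }
    simpl mono; rewrite Nat.add_1_r.
    replace (shift (fun j => mu (length pre + j)%nat))
      with (fun j => mu (S (length pre) + j)%nat)
      by (apply functional_extensionality; intro j; unfold shift; f_equal; lia).
    unfold bsum, slice; simpl; ring.
Qed.

Lemma Bop_mono L g mu x phi s : length s = L ->
  Bop L g mu x phi s = mono g L mu x false true phi s.
Proof.
  intros Hs; unfold Bop, T0.
  rewrite (Tfrom_mono g mu x L nil s _ false Hs); simpl; unfold bsum; simpl.
  rewrite mono_zero; change (fun j => mu j) with mu; change (fun u => phi u) with phi; ring.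
Qed.

Definition Bprod (g : Cplx) (n : nat) (mu : nat -> Cplx) (ys : list Cplx) (v : St) : St :=
  fold_right (fun y w => mono g n mu y false true w) v ys.

Lemma Bchain_Bprod L g mu y m : forall k phi s, length s = L ->
  Bchain L g mu y k m phi s = Bprod g L mu (map y (seq k m)) phi s.
Proof.
  induction m as [|m IH]; intros k phi s Hs; [reflexivity|].
  simpl; rewrite Bop_mono by auto; apply mono_local; intros u Hu; apply IH; lia.
Qed.

Definition Bvec (g : Cplx) (n : nat) (mu : nat -> Cplx) (ys : list Cplx) : St :=
  Bprod g n mu ys (vac n).

Lemma Zdw_Bvec L g mu y : Zdw L g mu y = Bvec g L mu (map y (seq 1 L)) (repeat true L).
Proof. apply Bchain_Bprod, repeat_length. Qed.

(** * The off-shell action of A *)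

Definition fratio (g y z : Cplx) : Cplx := Cdiv (wa g (Csub y z)) (wb (Csub y z)).

Definition hratio (g y z : Cplx) : Cplx := Cdiv (wc g) (wb (Csub y z)).

Definition apart (y z : Cplx) : Prop := wb (Csub y z) <> C0.

Lemma apart_sym y z : apart y z -> apart z y.
Proof. unfold apart; rewrite wb_sub_anti; intros H E; apply H; rewrite E; ring. Qed.

Lemma hratio_fratio g y w z : apart w z -> apart y w -> apart y z ->
  Cmul (hratio g w z) (fratio g y w)
  = Csub (Cmul (fratio g y z) (hratio g w z)) (Cmul (hratio g y z) (hratio g w y)).
Proof.
  unfold apart, fratio, hratio; intros Hwz Hyw Hyz.
  rewrite (wb_sub_anti y w).
  replace (wa g (Csub y w)) with
    (Cdiv (Cadd (Cmul (wa g (Csub y z)) (wb (Csub y w))) (Cmul (wc g) (wb (Csub w z))))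
          (wb (Csub y z))) by (rewrite <- weights_addition; field; auto).
  field; repeat split; auto.
  intro E; apply Hyw; transitivity (Copp (Copp (wb (Csub y w)))); [ring | rewrite E; ring].
Qed.

Fixpoint lprod (l : list Cplx) (F : Cplx -> Cplx) : Cplx :=
  match l with nil => C1 | y :: t => Cmul (F y) (lprod t F) end.

Fixpoint remove_at (i : nat) (l : list Cplx) : list Cplx :=
  match l, i with
  | nil, _ => nil
  | _ :: t, O => t
  | y :: t, S i' => y :: remove_at i' t
  end.

Fixpoint replace_at (l : list Cplx) (i : nat) (z : Cplx) : list Cplx :=
  match l, i with
  | nil, _ => nil
  | _ :: t, O => z :: t
  | y :: t, S i' => y :: replace_at t i' z
  end.

Lemma perm_replace_at (z y : Cplx) ys i : (i < length ys)%nat ->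
  Permutation (z :: replace_at ys i y) (y :: replace_at ys i z).
Proof.
  revert i; induction ys as [|a ys IH]; intros [|i] Hi; simpl in *; try lia.
  - apply perm_swap.
  - eapply perm_trans; [apply perm_swap|].
    eapply perm_trans; [|apply perm_swap].
    apply perm_skip, IH; lia.
Qed.

Lemma Bprod_perm g n mu ys ys' v :
  Permutation ys ys' -> Bprod g n mu ys v = Bprod g n mu ys' v.
Proof.
  induction 1; simpl; try congruence.
  apply functional_extensionality; intro s; apply B_comm.
Qed.

Lemma mono_expansion g n mu x i k c (W : St) m (M : nat -> Cplx) (V : nat -> St) s :
  mono g n mu x i k (fun u => Cadd (Cmul c (W u)) (Csum m (fun j => Cmul (M j) (V j u)))) s
  = Cadd (Cmul c (mono g n mu x i k W s))
         (Csum m (fun j => Cmul (M j) (mono g n mu x i k (V j) s))).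
Proof.
  rewrite mono_add, mono_scale, mono_Csum; f_equal.
  apply Csum_ext; intros; apply mono_scale.
Qed.

Definition vac_coef (g : Cplx) (n : nat) (mu : nat -> Cplx) (z : Cplx) (ys : list Cplx)
  : Cplx :=
  Cmul (vac_eigen g n mu z) (lprod ys (fun w => fratio g w z)).

Definition exch_coef (g : Cplx) (n : nat) (mu : nat -> Cplx) (z : Cplx) (ys : list Cplx)
  (i : nat) : Cplx :=
  let w := nth i ys C0 in
  Copp (Cmul (hratio g w z)
             (Cmul (vac_eigen g n mu w) (lprod (remove_at i ys) (fun u => fratio g u w)))).

Lemma exch_coef_cons_S g n mu z y ys i :
  apart (nth i ys C0) z -> apart y (nth i ys C0) -> apart y z ->
  exch_coef g n mu z (y :: ys) (S i)
  = Csub (Cmul (fratio g y z) (exch_coef g n mu z ys i))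
         (Cmul (hratio g y z) (exch_coef g n mu y ys i)).
Proof.
  intros Hwz Hyw Hyz; unfold exch_coef; simpl.
  transitivity (Copp (Cmul (Cmul (hratio g (nth i ys C0) z) (fratio g y (nth i ys C0)))
    (Cmul (vac_eigen g n mu (nth i ys C0))
          (lprod (remove_at i ys) (fun u => fratio g u (nth i ys C0)))))); [ring|].
  rewrite hratio_fratio; auto; ring.
Qed.

Lemma exch_coef_cons_0 g n mu z y ys :
  exch_coef g n mu z (y :: ys) 0 = Copp (Cmul (hratio g y z) (vac_coef g n mu y ys)).
Proof. reflexivity. Qed.

Lemma vac_coef_cons g n mu z y ys :
  vac_coef g n mu z (y :: ys) = Cmul (fratio g y z) (vac_coef g n mu z ys).
Proof. unfold vac_coef; simpl; ring. Qed.

Definition A_action_formula (g : Cplx) (n : nat) (mu : nat -> Cplx) (z : Cplx)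
  (ys : list Cplx) : Prop :=
  forall s, mono g n mu z false false (Bvec g n mu ys) s =
    Cadd (Cmul (vac_coef g n mu z ys) (Bvec g n mu ys s))
         (Csum (length ys) (fun i =>
            Cmul (exch_coef g n mu z ys i) (Bvec g n mu (replace_at ys i z) s))).

Lemma A_action_formula_cons g n mu z y ys :
  apart z y -> Forall (apart z) ys -> Forall (apart y) ys ->
  A_action_formula g n mu z ys -> A_action_formula g n mu y ys ->
  A_action_formula g n mu z (y :: ys).
Proof.
  intros Hzy Hzys Hyys IHz IHy s.
  transitivity (mono g n mu z false false (mono g n mu y false true (Bvec g n mu ys)) s);
    [reflexivity|].
  rewrite AB_exchange by (apply apart_sym; auto).
  rewrite (functional_extensionality _ _ IHz), (functional_extensionality _ _ IHy).
  rewrite !mono_expansion.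
  cbn [length]; rewrite Csum_first, exch_coef_cons_0, vac_coef_cons; cbn [replace_at].
  fold (fratio g y z) (hratio g y z).
  change (mono g n mu y false true (Bvec g n mu ys)) with (Bvec g n mu (y :: ys)).
  change (mono g n mu z false true (Bvec g n mu ys)) with (Bvec g n mu (z :: ys)).
  rewrite (Csum_ext _ (fun j => Cmul (exch_coef g n mu z ys j)
      (mono g n mu y false true (fun u => Bvec g n mu (replace_at ys j z) u) s))
    (fun j => Cmul (exch_coef g n mu z ys j) (Bvec g n mu (y :: replace_at ys j z) s)))
    by reflexivity.
  rewrite (Csum_ext _ (fun j => Cmul (exch_coef g n mu y ys j)
      (mono g n mu z false true (fun u => Bvec g n mu (replace_at ys j y) u) s))
    (fun j => Cmul (exch_coef g n mu y ys j) (Bvec g n mu (y :: replace_at ys j z) s))).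
  2: { intros j Hj; unfold Bvec;
       rewrite <- (Bprod_perm g n mu _ _ _ (perm_replace_at z y ys j Hj)); reflexivity. }
  rewrite (Csum_ext _ (fun i => Cmul (exch_coef g n mu z (y :: ys) (S i))
                                     (Bvec g n mu (y :: replace_at ys i z) s))
    (fun i => Cmul (Csub (Cmul (fratio g y z) (exch_coef g n mu z ys i))
                         (Cmul (hratio g y z) (exch_coef g n mu y ys i)))
                   (Bvec g n mu (y :: replace_at ys i z) s))).
  2: { intros i Hi; rewrite exch_coef_cons_S; [reflexivity | ..];
       pose proof (nth_In ys C0 Hi); rewrite Forall_forall in *; auto using apart_sym. }
  rewrite Csum_lincomb; ring.
Qed.

Lemma A_action g n mu z ys :
  ForallOrdPairs apart (z :: ys) -> A_action_formula g n mu z ys.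
Proof.
  revert z; induction ys as [|y ys IH]; intros z Hap.
  - intro s; simpl; rewrite mono_vac; unfold vac_coef; simpl; ring.
  - inversion Hap as [|? ? Hz Hys]; inversion Hz; inversion Hys; subst.
    apply A_action_formula_cons; auto; apply IH; constructor; auto.
Qed.

(** * The relation for l = 0 *)

Lemma lprod_map_seq (x : nat -> Cplx) G a m :
  lprod (map x (seq a m)) G = Cprod m (fun j => G (x (a + j)%nat)).
Proof.
  revert a; induction m as [|m IH]; intros a; [reflexivity|].
  cbn [seq map lprod]; rewrite Cprod_first, IH, Nat.add_0_r; f_equal.
  apply Cprod_ext; intros j _; do 2 f_equal; lia.
Qed.

Lemma lprod_remove_at_map_seq (x : nat -> Cplx) G a m i :
  lprod (remove_at i (map x (seq a m))) G
  = Cprod m (fun j => if Nat.eqb j i then C1 else G (x (a + j)%nat)).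
Proof.
  revert a i; induction m as [|m IH]; intros a [|i]; [reflexivity .. | |];
    cbn [seq map remove_at]; rewrite Cprod_first; simpl Nat.eqb.
  - rewrite lprod_map_seq; transitivity (Cmul C1 (Cprod m (fun j => G (x (S a + j)%nat))));
      [ring|].
    f_equal; apply Cprod_ext; intros j _; do 2 f_equal; lia.
  - cbn [lprod]; rewrite IH, Nat.add_0_r; f_equal.
    apply Cprod_ext; intros j _; simpl Nat.eqb; destruct (Nat.eqb j i); auto.
    do 2 f_equal; lia.
Qed.

Lemma replace_at_map_seq (x : nat -> Cplx) a m i : (i < m)%nat ->
  replace_at (map x (seq a m)) i (x O) = map (Xrep x (a + i)%nat) (seq a m).
Proof.
  revert a i; induction m as [|m IH]; intros a [|i] Hi; try lia;
    cbn [seq map replace_at]; unfold Xrep at 1.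
  - rewrite Nat.add_0_r, Nat.eqb_refl; f_equal.
    apply map_ext_in; intros k Hk; apply in_seq in Hk; unfold Xrep.
    destruct (Nat.eqb_spec k a); [lia | reflexivity].
  - destruct (Nat.eqb_spec a (a + S i)); [lia|]; rewrite IH by lia.
    replace (S a + i)%nat with (a + S i)%nat by lia; reflexivity.
Qed.

Lemma nth_map_seq (x : nat -> Cplx) a m i : (i < m)%nat ->
  nth i (map x (seq a m)) C0 = x (a + i)%nat.
Proof.
  intros Hi; rewrite (nth_indep _ _ (x O)) by (rewrite length_map, length_seq; auto).
  rewrite map_nth, seq_nth; auto.
Qed.

Lemma Zdw_Xrep_0 L g mu x : Zdw L g mu (Xrep x 0) = Zdw L g mu x.
Proof.
  rewrite !Zdw_Bvec; f_equal.
  apply map_ext_in; intros k Hk; apply in_seq in Hk; unfold Xrep.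
  destruct (Nat.eqb_spec k 0); [lia | reflexivity].
Qed.

Lemma Zdw_Xrep_S L g mu x i : (i < L)%nat ->
  Zdw L g mu (Xrep x (S i))
  = Bvec g L mu (replace_at (map x (seq 1 L)) i (x O)) (repeat true L).
Proof. intros Hi; rewrite Zdw_Bvec, replace_at_map_seq by auto; reflexivity. Qed.

Lemma sigma_coef_0_0 L g mu x :
  sigma_coef L g mu x 0 0
  = Csub (dual_vac_eigen L mu (x O)) (vac_coef g L mu (x O) (map x (seq 1 L))).
Proof.
  unfold sigma_coef, vac_coef; simpl Nat.eqb; cbv iota.
  rewrite !Cprod_range_1, Cprod_range_0, lprod_map_seq; simpl Nat.eqb; cbv iota.
  unfold dual_vac_eigen, vac_eigen, ab, fratio; simpl; ring.
Qed.

Lemma sigma_coef_0_S L g mu x i : (i < L)%nat ->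
  sigma_coef L g mu x 0 (S i) = Copp (exch_coef g L mu (x O) (map x (seq 1 L)) i).
Proof.
  intros Hi; unfold sigma_coef, exch_coef; simpl Nat.eqb; cbv iota.
  rewrite Cprod_range_1, Cprod_range_0, nth_map_seq, lprod_remove_at_map_seq by auto.
  simpl Nat.eqb; simpl orb.
  rewrite (Cprod_ext L (fun j => if (j =? i)%nat || false then C1 else ab g x (S j) (S i))
             (fun j => if Nat.eqb j i then C1 else fratio g (x (1 + j)%nat) (x (1 + i)%nat))).
  - unfold vac_eigen, hratio; simpl; ring.
  - intros j _; rewrite orb_false_r; reflexivity.
Qed.

Lemma sigma_Z_relation_0 (g : Cplx) (L : nat) (mu x : nat -> Cplx) :
  (forall j k : nat, (j <= L)%nat -> (k <= L)%nat -> j <> k ->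
     wb (Csub (x j) (x k)) <> C0) ->
  Csum (S L) (fun i => Cmul (sigma_coef L g mu x 0 i) (Zdw L g mu (Xrep x i))) = C0.
Proof.
  intros Hx.
  assert (Hap : ForallOrdPairs apart (map x (seq 0 (S L)))).
  { apply ForallOrdPairs_map_NoDup; [|apply seq_NoDup].
    intros j k Hj Hk; apply in_seq in Hj, Hk; apply Hx; lia. }
  pose proof (A_action g L mu (x O) (map x (seq 1 L)) Hap (repeat true L)) as E.
  rewrite dual_vac_mono, <- Zdw_Bvec, length_map, length_seq in E.
  rewrite Csum_first, sigma_coef_0_0, Zdw_Xrep_0.
  rewrite (Csum_ext L _ (fun i => Cmul (Copp C1)
             (Cmul (exch_coef g L mu (x O) (map x (seq 1 L)) i)
                   (Bvec g L mu (replace_at (map x (seq 1 L)) i (x O)) (repeat true L))))).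
  - rewrite Csum_scale.
    match type of E with ?P = ?Q => transitivity (Csub P Q); [ring | rewrite E; ring] end.
  - intros i Hi; rewrite sigma_coef_0_S, Zdw_Xrep_S by auto; ring.
Qed.

(** * Exchanging x_0 and x_l *)

Lemma Zdw_ext L g mu y y' : (forall k, (1 <= k <= L)%nat -> y k = y' k) ->
  Zdw L g mu y = Zdw L g mu y'.
Proof.
  intros E; rewrite !Zdw_Bvec; f_equal.
  apply map_ext_in; intros k Hk; apply in_seq in Hk; apply E; lia.
Qed.

Lemma Zdw_transp L g mu y a b : (1 <= a <= L)%nat -> (1 <= b <= L)%nat ->
  Zdw L g mu (fun k => y (transp a b k)) = Zdw L g mu y.
Proof.
  intros Ha Hb; rewrite !Zdw_Bvec; unfold Bvec.
  rewrite <- (map_map (transp a b) y), (Bprod_perm g L mu _ (map y (seq 1 L))); auto.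
  apply Permutation_map, transp_seq_perm; lia.
Qed.

Lemma Zdw_Xrep_transp L g mu x l i : (1 <= l <= L)%nat -> (i <= L)%nat ->
  Zdw L g mu (Xrep (fun k => x (transp 0 l k)) i) = Zdw L g mu (Xrep x (transp 0 l i)).
Proof.
  intros Hl Hi.
  destruct (Nat.eq_dec i 0) as [->|Hi0]; [|destruct (Nat.eq_dec i l) as [->|Hil]].
  - apply Zdw_ext; intros k Hk; unfold Xrep, transp; case_nat_eqb; subst; reflexivity.
  - apply Zdw_ext; intros k Hk; unfold Xrep, transp; case_nat_eqb; subst; reflexivity.
  - rewrite <- (Zdw_transp L g mu (Xrep x (transp 0 l i)) i l) by lia.
    apply Zdw_ext; intros k Hk; unfold Xrep, transp; case_nat_eqb; subst; reflexivity.
Qed.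

Lemma sigma_coef_diag L g mu x l :
  sigma_coef L g mu x l l =
  Csub (Cprod_range 1 L (fun k => wb (Csub (x l) (mu k))))
       (Cmul (Cprod_range 1 L (fun k => wa g (Csub (x l) (mu k))))
             (Cprod_range 0 L (fun k => if Nat.eqb k l then C1 else ab g x k l))).
Proof. unfold sigma_coef; rewrite Nat.eqb_refl; reflexivity. Qed.

Lemma sigma_coef_at_0 L g mu x l : l <> 0%nat ->
  sigma_coef L g mu x l 0 =
  Cmul (Cdiv (wc g) (wb (Csub (x O) (x l))))
    (Cmul (Cprod_range 1 L (fun k => wa g (Csub (x O) (mu k))))
          (Cprod_range 1 L (fun k => if Nat.eqb k l then C1 else ab g x k O))).
Proof. intros Hl; unfold sigma_coef; case_nat_eqb; reflexivity. Qed.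

Lemma sigma_coef_off L g mu x l i : i <> l -> i <> 0%nat ->
  sigma_coef L g mu x l i =
  Cmul (Cdiv (wc g) (wb (Csub (x i) (x l))))
    (Cmul (Cprod_range 1 L (fun k => wa g (Csub (x i) (mu k))))
          (Cprod_range 0 L (fun k =>
             if Nat.eqb k i || Nat.eqb k l then C1 else ab g x k i))).
Proof. intros Hil Hi; unfold sigma_coef; case_nat_eqb; reflexivity. Qed.

Lemma sigma_coef_transp L g mu x l i : (1 <= l <= L)%nat -> (i <= L)%nat ->
  sigma_coef L g mu (fun k => x (transp 0 l k)) 0 i = sigma_coef L g mu x l (transp 0 l i).
Proof.
  intros Hl Hi.
  assert (Hrange : forall F, Cprod_range 0 L F = Cprod_range 0 L (fun k => F (transp 0 l k)))
    by (intro F; apply Cprod_transp; lia).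
  assert (Ht0 : transp 0 l 0 = l) by (unfold transp; case_nat_eqb).
  assert (Htl : transp 0 l l = 0%nat) by (unfold transp; case_nat_eqb).
  destruct (Nat.eq_dec i 0) as [->|Hi0]; [|destruct (Nat.eq_dec i l) as [->|Hil]].
  - rewrite Ht0, !sigma_coef_diag, Hrange, Ht0; unfold ab.
    f_equal; f_equal; apply Cprod_range_ext; intros k Hk.
    rewrite transp_involutive; unfold transp; case_nat_eqb; reflexivity.
  - rewrite Htl, sigma_coef_off, sigma_coef_at_0, !Cprod_range_1, Cprod_range_0, Htl, Ht0,
      orb_true_r by lia.
    f_equal; f_equal.
    transitivity (Cprod L (fun j => if (S j =? l) || (S j =? 0)
      then C1 else ab g (fun k => x (transp 0 l k)) (S j) l)); [ring|].
    apply Cprod_ext; intros j Hj; unfold ab, transp; case_nat_eqb; reflexivity.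
  - assert (Hti : transp 0 l i = i) by (unfold transp; case_nat_eqb).
    rewrite Hti, !sigma_coef_off, Hrange, Ht0, Hti by lia.
    f_equal; f_equal; apply Cprod_range_ext; intros k Hk.
    unfold ab, transp, orb; case_nat_eqb; subst; reflexivity.
Qed.

Theorem corollary6p1 (g : Cplx) (L : nat) (mu x : nat -> Cplx) :
  (1 <= L)%nat ->
  (forall j k : nat, (j <= L)%nat -> (k <= L)%nat -> j <> k ->
     wb (Csub (x j) (x k)) <> C0) ->
  forall l : nat, (l <= L)%nat ->
    Csum (S L) (fun i => Cmul (sigma_coef L g mu x l i) (Zdw L g mu (Xrep x i))) = C0.
Proof.
  intros HL Hx l Hl.
  destruct (Nat.eq_dec l 0) as [->|Hl0]; [apply sigma_Z_relation_0; auto|].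
  rewrite (Csum_transp (S L) _ 0 l) by lia.
  rewrite <- (sigma_Z_relation_0 g L mu (fun k => x (transp 0 l k))).
  - apply Csum_ext; intros i Hi.
    rewrite sigma_coef_transp, Zdw_Xrep_transp by lia; reflexivity.
  - intros j k Hj Hk Hjk; apply Hx; try (apply transp_le; lia).
    intro E; apply Hjk; rewrite <- (transp_involutive 0 l j), E; apply transp_involutive.
Qed.
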